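(* Let $(X,T)$ be a linearly recurrent minimal Cantor system with a sequence of CKR partitions satisfying (KR1)–(KR6) and (LR), and $\mu$ its unique invariant probability measure. There exist $c\ge0$ and $\beta\in[0,1)$ such that for all $n,k\in\mathbb N$ with $k\le n$, $$\sup_{1\le t\le C(n-k),\,1\le\bar t\le C(n)}\big|\mu[\tau_n=\bar t\mid\tau_{n-k}=t]-\mu[\tau_n=\bar t]\big|\le c\beta^k.$$
   Context: Minimal Cantor system, CKR partitions $\mathcal P(n)=\{T^{-j}B_k(n):1\le k\le C(n),0\le j<h_k(n)\}$ with $\mathcal P(0)$ trivial, roof $B(n)=\bigcup_kB_k(n)$, towers $\mathcal T_k(n)=\bigcup_{0\le j<h_k(n)}T^{-j}B_k(n)$, conditions (KR1) $B(n+1)\subseteq B(n)$; (KR2) $\mathcal P(n+1)$ refines $\mathcal P(n)$; (KR3) $\bigcap_nB(n)$ is one point; (KR4) the partitions generate the topology; (KR5) for all $n\ge1$, $k\le C(n-1)$, $l\le C(n)$ some $0\le j<h_l(n)$ has $T^{-j}B_l(n)\subseteq B_k(n-1)$; (KR6) $B(n)\subseteq B_1(n-1)$; (LR) $h_l(n)\le Lh_k(n-1)$ for a constant $L$. $\tau_n(x)=k$ iff $x\in\mathcal T_k(n)$; $(\tau_n)$ is a non-stationary Markov chain under $\mu$. *)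

From Stdlib Require Import Reals Arith.
Open Scope R_scope.

Definition set (X : Type) := X -> Prop.

Definition is_topology {X : Type} (op : set X -> Prop) : Prop :=
  op (fun _ => True) /\ op (fun _ => False) /\
  (forall U V, op U -> op V -> op (fun x => U x /\ V x)) /\
  (forall F : set X -> Prop, (forall U, F U -> op U) ->
     op (fun x => exists U, F U /\ U x)).

Definition is_closed {X : Type} (op : set X -> Prop) (A : set X) : Prop :=
  op (fun x => ~ A x).

Definition is_clopen {X : Type} (op : set X -> Prop) (A : set X) : Prop :=
  op A /\ is_closed op A.

Definition compact_space {X : Type} (op : set X -> Prop) : Prop :=
  forall (I : Type) (U : I -> set X),
    (forall i, op (U i)) -> (forall x, exists i, U i x) ->
    exists l : list I, forall x, exists i, List.In i l /\ U i x.

Definition hausdorff {X : Type} (op : set X -> Prop) : Prop :=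
  forall x y : X, x <> y -> exists U V, op U /\ op V /\ U x /\ V y /\
    (forall z, U z -> V z -> False).

Definition no_isolated_points {X : Type} (op : set X -> Prop) : Prop :=
  forall x : X, ~ op (fun y => y = x).

Definition countable_clopen_base {X : Type} (op : set X -> Prop) : Prop :=
  exists W : nat -> set X, (forall m, is_clopen op (W m)) /\
    forall U x, op U -> U x -> exists m, W m x /\ (forall y, W m y -> U y).

(* Cantor space: nonempty, compact, Hausdorff, second countable (hence
   metrizable), zero-dimensional (hence totally disconnected), perfect. *)
Definition cantor_space {X : Type} (op : set X -> Prop) : Prop :=
  is_topology op /\ (exists x : X, True) /\ compact_space op /\ hausdorff op /\
  countable_clopen_base op /\ no_isolated_points op.

Definition homeomorphism {X : Type} (op : set X -> Prop) (T : X -> X) : Prop :=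
  (forall x y, T x = T y -> x = y) /\ (forall y, exists x, T x = y) /\
  (forall U, op U -> op (fun x => U (T x))) /\
  (forall U, op U -> op (fun y => exists x, U x /\ T x = y)).

Definition minimal_system {X : Type} (op : set X -> Prop) (T : X -> X) : Prop :=
  forall F : set X, is_closed op F -> (forall x, F (T x) <-> F x) ->
    (exists x, F x) -> forall x, F x.

Definition minimal_cantor_system {X : Type} (op : set X -> Prop) (T : X -> X) : Prop :=
  cantor_space op /\ homeomorphism op T /\ minimal_system op T.

Definition sigma_algebra {X : Type} (S : set X -> Prop) : Prop :=
  S (fun _ => True) /\ (forall A, S A -> S (fun x => ~ A x)) /\
  (forall A : nat -> set X, (forall i, S (A i)) -> S (fun x => exists i, A i x)).

Definition borel {X : Type} (op : set X -> Prop) (A : set X) : Prop :=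
  forall S : set X -> Prop, sigma_algebra S -> (forall U, op U -> S U) -> S A.

Definition borel_probability {X : Type} (op : set X -> Prop) (mu : set X -> R) : Prop :=
  (forall A, borel op A -> 0 <= mu A) /\ mu (fun _ => True) = 1 /\
  (forall A : nat -> set X, (forall i, borel op (A i)) ->
     (forall i j x, i <> j -> A i x -> A j x -> False) ->
     infinite_sum (fun i => mu (A i)) (mu (fun x => exists i, A i x))).

Definition invariant_probability {X : Type} (op : set X -> Prop) (T : X -> X)
  (mu : set X -> R) : Prop :=
  borel_probability op mu /\
  forall A, borel op A -> mu (fun x => A (T x)) = mu A.

(* Data: C n = number of towers of P(n); towers indexed by 1 <= k <= C n;
   B n k = B_k(n) (the roof piece); h n k = h_k(n).
   The atom T^{-j} B_k(n) is {x | T^j x \in B_k(n)}. *)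
Definition atom {X : Type} (T : X -> X) (B : nat -> nat -> set X)
  (n k j : nat) : set X := fun x => B n k (Nat.iter j T x).

Definition in_range (C : nat -> nat) (h : nat -> nat -> nat) (n k j : nat) : Prop :=
  (1 <= k <= C n)%nat /\ (j < h n k)%nat.

Definition roof {X : Type} (C : nat -> nat) (B : nat -> nat -> set X) (n : nat) : set X :=
  fun x => exists k, (1 <= k <= C n)%nat /\ B n k x.

Definition tower {X : Type} (T : X -> X) (h : nat -> nat -> nat)
  (B : nat -> nat -> set X) (n k : nat) : set X :=
  fun x => exists j, (j < h n k)%nat /\ atom T B n k j x.

Definition CKR_partitions {X : Type} (op : set X -> Prop) (T : X -> X)
  (C : nat -> nat) (h : nat -> nat -> nat) (B : nat -> nat -> set X) : Prop :=
  (forall n k, (1 <= k <= C n)%nat ->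
     is_clopen op (B n k) /\ (exists x, B n k x) /\ (1 <= h n k)%nat) /\
  (forall n k j k' j' x, in_range C h n k j -> in_range C h n k' j' ->
     atom T B n k j x -> atom T B n k' j' x -> k = k' /\ j = j') /\
  (forall n x, exists k j, in_range C h n k j /\ atom T B n k j x) /\
  (C 0%nat = 1%nat /\ h 0%nat 1%nat = 1%nat /\ forall x, B 0%nat 1%nat x).

Definition KR1 {X : Type} (C : nat -> nat) (B : nat -> nat -> set X) : Prop :=
  forall n x, roof C B (S n) x -> roof C B n x.

Definition KR2 {X : Type} (T : X -> X) (C : nat -> nat) (h : nat -> nat -> nat)
  (B : nat -> nat -> set X) : Prop :=
  forall n k j, in_range C h (S n) k j ->
    exists k' j', in_range C h n k' j' /\
      forall x, atom T B (S n) k j x -> atom T B n k' j' x.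

Definition KR3 {X : Type} (C : nat -> nat) (B : nat -> nat -> set X) : Prop :=
  exists x0 : X, forall y, (forall n, roof C B n y) <-> y = x0.

Definition KR4 {X : Type} (op : set X -> Prop) (T : X -> X) (C : nat -> nat)
  (h : nat -> nat -> nat) (B : nat -> nat -> set X) : Prop :=
  forall U x, op U -> U x -> exists n k j, in_range C h n k j /\
    atom T B n k j x /\ forall y, atom T B n k j y -> U y.

Definition KR5 {X : Type} (T : X -> X) (C : nat -> nat) (h : nat -> nat -> nat)
  (B : nat -> nat -> set X) : Prop :=
  forall n k l, (1 <= n)%nat -> (1 <= k <= C (n - 1))%nat -> (1 <= l <= C n)%nat ->
    exists j, (j < h n l)%nat /\
      forall x, atom T B n l j x -> B (n - 1)%nat k x.

Definition KR6 {X : Type} (C : nat -> nat) (B : nat -> nat -> set X) : Prop :=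
  forall n x, (1 <= n)%nat -> roof C B n x -> B (n - 1)%nat 1%nat x.

Definition LR (C : nat -> nat) (h : nat -> nat -> nat) : Prop :=
  exists L : nat, forall n k l, (1 <= n)%nat -> (1 <= k <= C (n - 1))%nat ->
    (1 <= l <= C n)%nat -> (h n l <= L * h (n - 1)%nat k)%nat.

Definition cond_prob {X : Type} (mu : set X -> R) (P Q : set X) : R :=
  mu (fun x => P x /\ Q x) / mu Q.

From Stdlib Require Import Reals Arith Lia Lra.
From Stdlib Require Import ClassicalEpsilon FunctionalExtensionality PropExtensionality.
Open Scope R_scope.

(** Write [tau_m(x) = t] for [x] lying in the tower [T_t(m)].  The proof is a
  Doeblin-type argument for the non-stationary chain [(tau_m)]:
  - finite additivity and T-invariance of [mu] give the "column counting"
    formula: a set that is constant along the columns of the tower [T_r(m+1)]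
    meets a union of levels of that tower in (number of levels) times its
    measure on the base [B_r(m+1)];
  - from it, conditioning on [tau_m = t] and then on [tau_(m+1) = r] gives the
    Markov property [P(A | tau_m = t) = sum_r P(tau_(m+1) = r | tau_m = t)
    P(A | tau_(m+1) = r)] for [A = {tau_n = tb}], [m < n];
  - (KR5) puts a full copy of the tower [T_t(m)] inside every tower [T_r(m+1)],
    which with (LR) yields the minorization
    [P(tau_(m+1) = r | tau_m = t) >= mu(tau_(m+1) = r) / L];
  - an abstract Doeblin contraction lemma then shrinks the oscillation of
    [t |-> P(A | tau_(n-k) = t)] by a factor [1 - 1/L] per step, and the
    unconditional probability, being an average of these values, lies within
    that oscillation.  Hence the theorem holds with [c = 1], [beta = 1 - 1/L]. *)

Lemma set_fun_ext {X Y : Type} (F : set X -> Y) (A B : set X) :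
  (forall x, A x <-> B x) -> F A = F B.
Proof.
  intro H. f_equal. apply functional_extensionality; intro x.
  apply propositional_extensionality; auto.
Qed.

(** Finite sums [sumR f n = f 1 + ... + f n] (towers are indexed from 1). *)
Fixpoint sumR (f : nat -> R) (n : nat) : R :=
  match n with 0 => 0 | S n => sumR f n + f (S n) end.

Lemma sumR_ext f g n : (forall i, (1 <= i <= n)%nat -> f i = g i) -> sumR f n = sumR g n.
Proof.
  induction n as [|n IH]; intro H; simpl; auto.
  rewrite IH, (H (S n)); auto; intros; try apply H; lia.
Qed.

Lemma sumR_scal c f n : sumR (fun i => c * f i) n = c * sumR f n.
Proof. induction n as [|n IH]; simpl; [ring | rewrite IH; ring]. Qed.

Lemma sumR_plus f g n : sumR (fun i => f i + g i) n = sumR f n + sumR g n.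
Proof. induction n as [|n IH]; simpl; [ring | rewrite IH; ring]. Qed.

Lemma sumR_minus f g n : sumR (fun i => f i - g i) n = sumR f n - sumR g n.
Proof. induction n as [|n IH]; simpl; [ring | rewrite IH; ring]. Qed.

Lemma sumR_le f g n : (forall i, (1 <= i <= n)%nat -> f i <= g i) -> sumR f n <= sumR g n.
Proof.
  induction n as [|n IH]; intro H; simpl; [lra|].
  apply Rplus_le_compat; [apply IH; intros; apply H | apply H]; lia.
Qed.

Lemma sumR_bounds K (v g : nat -> R) a b :
  (forall r, (1 <= r <= K)%nat -> 0 <= v r) ->
  (forall r, (1 <= r <= K)%nat -> a <= g r <= b) ->
  sumR v K * a <= sumR (fun r => v r * g r) K <= sumR v K * b.
Proof.
  intros Hv Hg. rewrite (Rmult_comm _ a), (Rmult_comm _ b), <- !sumR_scal.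
  split; apply sumR_le; intros r Hr; specialize (Hv r Hr); specialize (Hg r Hr); nra.
Qed.

Definition indicator (P : Prop) : nat :=
  if excluded_middle_informative P then 1%nat else 0%nat.

Fixpoint count_lt (P : nat -> Prop) (n : nat) : nat :=
  match n with 0 => 0%nat | S n => (count_lt P n + indicator (P n))%nat end.

Lemma count_lt_all P n : (forall j, (j < n)%nat -> P j) -> count_lt P n = n.
Proof.
  induction n as [|n IH]; intros H; simpl; auto.
  rewrite IH by auto. unfold indicator.
  destruct excluded_middle_informative as [_|N]; [lia|].
  exfalso; apply N, H; lia.
Qed.

Lemma count_lt_mono P a b : (a <= b)%nat -> (count_lt P a <= count_lt P b)%nat.
Proof. induction 1; simpl; lia. Qed.

Lemma count_lt_block P j0 a n :
  (forall i, (i < a)%nat -> P (j0 + i)%nat) -> (j0 + a <= n)%nat -> (a <= count_lt P n)%nat.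
Proof.
  intros H Hn.
  assert (K : forall a', (a' <= a)%nat -> (a' <= count_lt P (j0 + a'))%nat).
  { induction a' as [|a' IH]; intro Ha'; [lia|].
    replace (j0 + S a')%nat with (S (j0 + a')) by lia. simpl. unfold indicator.
    destruct excluded_middle_informative as [_|N].
    - specialize (IH ltac:(lia)); lia.
    - exfalso; apply N, H; lia. }
  pose proof (K a (le_n a)). pose proof (count_lt_mono P (j0 + a) n Hn). lia.
Qed.

Lemma doeblin_step K (w pi g : nat -> R) eps a b :
  (forall r, (1 <= r <= K)%nat -> eps * pi r <= w r) ->
  sumR w K = 1 -> sumR pi K = 1 -> (forall r, (1 <= r <= K)%nat -> a <= g r <= b) ->
  eps * sumR (fun r => pi r * g r) K + (1 - eps) * a <= sumR (fun r => w r * g r) K <=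
  eps * sumR (fun r => pi r * g r) K + (1 - eps) * b.
Proof.
  intros Hw Sw Sp Hg.
  assert (Split : sumR (fun r => w r * g r) K =
                  eps * sumR (fun r => pi r * g r) K + sumR (fun r => (w r - eps * pi r) * g r) K).
  { rewrite <- sumR_scal, <- sumR_plus. apply sumR_ext; intros; ring. }
  assert (Mass : sumR (fun r => w r - eps * pi r) K = 1 - eps).
  { rewrite sumR_minus, sumR_scal, Sw, Sp; ring. }
  destruct (sumR_bounds K (fun r => w r - eps * pi r) g a b) as [Lo Hi]; auto.
  { intros r Hr; specialize (Hw r Hr); lra. }
  rewrite Mass in Lo, Hi. rewrite Split. lra.
Qed.

Section DoeblinContraction.
Variables (K : nat -> nat) (w : nat -> nat -> nat -> R) (pi : nat -> nat -> R)
  (f : nat -> nat -> R) (eps : R) (n : nat).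
Hypothesis eps_range : 0 <= eps <= 1.
Hypothesis f_top : forall t, (1 <= t <= K n)%nat -> 0 <= f n t <= 1.
Hypothesis w_sum : forall m t, (m < n)%nat -> (1 <= t <= K m)%nat ->
  sumR (w m t) (K (S m)) = 1.
Hypothesis pi_sum : forall m, (m < n)%nat -> sumR (pi m) (K (S m)) = 1.
Hypothesis w_minor : forall m t r, (m < n)%nat -> (1 <= t <= K m)%nat ->
  (1 <= r <= K (S m))%nat -> eps * pi m r <= w m t r.
Hypothesis f_step : forall m t, (m < n)%nat -> (1 <= t <= K m)%nat ->
  f m t = sumR (fun r => w m t r * f (S m) r) (K (S m)).

Lemma doeblin_contraction k : (k <= n)%nat ->
  exists a b, b - a <= (1 - eps) ^ k /\
    forall t, (1 <= t <= K (n - k))%nat -> a <= f (n - k) t <= b.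
Proof.
  induction k as [|k IH]; intro Hk.
  - exists 0, 1. split; [simpl; lra|]. intros t Ht. rewrite Nat.sub_0_r in *. auto.
  - destruct (IH ltac:(lia)) as [a [b [Hab Hf]]].
    set (m := (n - S k)%nat).
    assert (Hm : (n - k)%nat = S m /\ (m < n)%nat) by (unfold m; lia).
    destruct Hm as [Em Hm]. rewrite Em in Hf.
    set (A := sumR (fun r => pi m r * f (S m) r) (K (S m))).
    exists (eps * A + (1 - eps) * a), (eps * A + (1 - eps) * b). split.
    + simpl. replace (eps * A + (1 - eps) * b - (eps * A + (1 - eps) * a))
        with ((1 - eps) * (b - a)) by ring.
      apply Rmult_le_compat_l; lra.
    + intros t Ht. rewrite f_step by auto. apply doeblin_step; auto.
Qed.
End DoeblinContraction.

Section Borel.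
Context {X : Type} {op : set X -> Prop}.

Lemma borel_open U : op U -> borel op U.
Proof. intros HU S HS HSU; auto. Qed.

Lemma borel_full : borel op (fun _ => True).
Proof. intros S [H _] _; exact H. Qed.

Lemma borel_compl A : borel op A -> borel op (fun x => ~ A x).
Proof. intros HA S HS HSU. pose proof HS as [_ [H _]]. apply H, HA; auto. Qed.

Lemma borel_cunion (A : nat -> set X) :
  (forall i, borel op (A i)) -> borel op (fun x => exists i, A i x).
Proof. intros HA S HS HSU. pose proof HS as [_ [_ H]]. apply H; intro i; apply HA; auto. Qed.

Lemma borel_ext A B : (forall x, A x <-> B x) -> borel op A -> borel op B.
Proof. intros H HA. rewrite <- (set_fun_ext (borel op) A B H). exact HA. Qed.

Lemma borel_union A B : borel op A -> borel op B -> borel op (fun x => A x \/ B x).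
Proof.
  intros HA HB.
  apply borel_ext with (fun x => exists i : nat, (match i with 0 => A | _ => B end) x).
  - intro x; split.
    + intros [[|i] H]; auto.
    + intros [H|H]; [exists 0%nat | exists 1%nat]; auto.
  - apply borel_cunion; intros [|i]; auto.
Qed.

Lemma borel_inter A B : borel op A -> borel op B -> borel op (fun x => A x /\ B x).
Proof.
  intros HA HB. apply borel_ext with (fun x => ~ ((~ A x) \/ (~ B x))).
  - intro x; tauto.
  - apply borel_compl, borel_union; apply borel_compl; auto.
Qed.

Lemma borel_empty : borel op (fun _ => False).
Proof. apply borel_ext with (fun x => ~ True); [tauto | apply borel_compl, borel_full]. Qed.

Lemma borel_iter (T : X -> X) (HopT : forall U, op U -> op (fun x => U (T x))) j A :
  borel op A -> borel op (fun x => A (Nat.iter j T x)).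
Proof.
  revert A; induction j as [|j IH]; intros A HA; simpl; auto.
  apply (IH (fun y => A (T y))).
  intros S HS HSU.
  apply (HA (fun A0 => S (fun x => A0 (T x)))).
  - destruct HS as [H1 [H2 H3]]. split; [|split]; auto.
  - intros U HU. apply HSU, HopT, HU.
Qed.
End Borel.

Definition borel_partition {X : Type} (op : set X -> Prop) (A : nat -> set X) (n : nat) : Prop :=
  (forall i, (1 <= i <= n)%nat -> borel op (A i)) /\
  (forall i j x, (1 <= i <= n)%nat -> (1 <= j <= n)%nat -> A i x -> A j x -> i = j) /\
  (forall x, exists i, (1 <= i <= n)%nat /\ A i x).

Section Measure.
Context {X : Type} {op : set X -> Prop} {mu : set X -> R}.
Hypothesis Hmu : borel_probability op mu.

Lemma mu_nonneg A : borel op A -> 0 <= mu A.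
Proof. apply Hmu. Qed.

Lemma mu_empty : mu (fun _ => False) = 0.
Proof.
  destruct Hmu as [_ [_ H]].
  specialize (H (fun _ _ => False) (fun _ => borel_empty) (fun i j x _ F _ => F)).
  rewrite (set_fun_ext mu _ (fun _ => False)) in H by (intro; split; [intros [_ F]|]; tauto).
  set (c := mu (fun _ => False)) in *.
  assert (Hs : forall n, sum_f_R0 (fun _ => c) n = INR (S n) * c).
  { induction n as [|n IH]; [simpl; ring|]. simpl sum_f_R0. rewrite IH, !S_INR. ring. }
  destruct (Req_dec c 0) as [E|E]; auto.
  destruct (H (Rabs c) ltac:(apply Rabs_pos_lt; auto)) as [N HN].
  specialize (HN (S N) ltac:(lia)). rewrite Hs in HN. unfold Rdist in HN.
  replace (INR (S (S N)) * c - c) with (INR (S N) * c) in HN by (rewrite (S_INR (S N)); ring).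
  rewrite Rabs_mult, (Rabs_right (INR (S N))) in HN by apply Rle_ge, pos_INR.
  assert (1 <= INR (S N)) by (rewrite S_INR; pose proof (pos_INR N); lra).
  pose proof (Rabs_pos c). nra.
Qed.

Lemma mu_union2 A B : borel op A -> borel op B -> (forall x, A x -> B x -> False) ->
  mu (fun x => A x \/ B x) = mu A + mu B.
Proof.
  intros HA HB HAB.
  destruct Hmu as [_ [_ H]].
  set (F := fun i : nat => match i with 0 => A | 1 => B | _ => fun _ => False end).
  assert (HF : forall i, borel op (F i)) by (intros [|[|i]]; simpl; auto using borel_empty).
  assert (HD : forall i j x, i <> j -> F i x -> F j x -> False).
  { intros [|[|i]] [|[|j]] x Hij; simpl; try tauto; try (intros; eapply HAB; eauto). }
  specialize (H F HF HD).
  rewrite (set_fun_ext mu _ (fun x => A x \/ B x)) in H.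
  2:{ intro x; split.
      - intros [[|[|i]] Hx]; simpl in Hx; tauto.
      - intros [Hx|Hx]; [exists 0%nat | exists 1%nat]; auto. }
  apply (uniqueness_sum (fun i => mu (F i))); auto.
  assert (Hs : forall n, sum_f_R0 (fun i => mu (F i)) (S n) = mu A + mu B).
  { induction n as [|n IH]; [simpl; ring|]. rewrite tech5, IH. simpl. rewrite mu_empty; ring. }
  intros eps Heps. exists 1%nat. intros [|n] Hn; [lia|].
  rewrite Hs. unfold Rdist. rewrite Rminus_diag, Rabs_R0. lra.
Qed.

Lemma mu_mono A B : borel op A -> borel op B -> (forall x, A x -> B x) -> mu A <= mu B.
Proof.
  intros HA HB HAB.
  assert (HBA : borel op (fun x => B x /\ ~ A x)) by (apply borel_inter; auto using borel_compl).
  rewrite (set_fun_ext mu B (fun x => A x \/ (B x /\ ~ A x))).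
  - rewrite mu_union2; auto; [|tauto]. pose proof (mu_nonneg _ HBA). lra.
  - intro x; split; [intro Hb; destruct (classic (A x)); auto | intros [H|[H _]]; auto].
Qed.

Lemma mu_le1 A : borel op A -> mu A <= 1.
Proof. intros HA. destruct Hmu as [_ [H1 _]]. rewrite <- H1. apply mu_mono; auto using borel_full. Qed.

Lemma mu_iter (T : X -> X) (HopT : forall U, op U -> op (fun x => U (T x)))
  (Hinv : forall A, borel op A -> mu (fun x => A (T x)) = mu A) j A :
  borel op A -> mu (fun x => A (Nat.iter j T x)) = mu A.
Proof.
  revert A; induction j as [|j IH]; intros A HA; simpl; auto.
  rewrite (IH (fun y => A (T y))); [apply Hinv; auto|]. apply (borel_iter T HopT 1%nat A HA).
Qed.

Lemma borel_finunion Y A n : borel op Y -> (forall i, (1 <= i <= n)%nat -> borel op (A i)) ->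
  borel op (fun x => Y x /\ exists i, (1 <= i <= n)%nat /\ A i x).
Proof.
  intros HY; induction n as [|n IH]; intro HA.
  - apply borel_ext with (fun _ => False); [|apply borel_empty].
    intro x; split; [tauto|]. intros [_ [i [Hi _]]]; lia.
  - apply borel_ext with (fun x => (Y x /\ exists i, (1 <= i <= n)%nat /\ A i x) \/ (Y x /\ A (S n) x)).
    + intro x; split.
      * intros [[Hy [i [Hi Ha]]]|[Hy Ha]]; split; auto;
          [exists i; split; auto; lia | exists (S n); split; auto; lia].
      * intros [Hy [i [Hi Ha]]]. destruct (Nat.eq_dec i (S n)) as [->|Ne];
          [right; auto | left; split; auto; exists i; split; auto; lia].
    + apply borel_union; [apply IH; intros; apply HA; lia | apply borel_inter; auto; apply HA; lia].
Qed.

Lemma mu_finpart Y A n : borel op Y -> (forall i, (1 <= i <= n)%nat -> borel op (A i)) ->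
  (forall i j x, (1 <= i <= n)%nat -> (1 <= j <= n)%nat -> A i x -> A j x -> i = j) ->
  mu (fun x => Y x /\ exists i, (1 <= i <= n)%nat /\ A i x) =
  sumR (fun i => mu (fun x => Y x /\ A i x)) n.
Proof.
  intros HY; induction n as [|n IH]; intros HA HD; simpl.
  - rewrite <- mu_empty. apply set_fun_ext. intro x; split; [|tauto]. intros [_ [i [Hi _]]]; lia.
  - rewrite <- IH by (intros; try apply HA; try eapply HD; eauto; lia).
    rewrite <- mu_union2.
    + apply set_fun_ext. intro x; split.
      * intros [Hy [i [Hi Ha]]]. destruct (Nat.eq_dec i (S n)) as [->|Ne];
          [right; auto | left; split; auto; exists i; split; auto; lia].
      * intros [[Hy [i [Hi Ha]]]|[Hy Ha]]; split; auto;
          [exists i; split; auto; lia | exists (S n); split; auto; lia].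
    + apply borel_finunion; auto. intros; apply HA; lia.
    + apply borel_inter; auto. apply HA; lia.
    + intros x [_ [i [Hi Ha]]] [_ Hb]. assert (i = S n) by (apply (HD i (S n) x); auto; lia). lia.
Qed.

Lemma mu_part Y A n : borel op Y -> borel_partition op A n ->
  mu Y = sumR (fun i => mu (fun x => Y x /\ A i x)) n.
Proof.
  intros HY [HA [HD HC]]. rewrite <- mu_finpart; auto.
  apply set_fun_ext. intro x; split; [|tauto]. intro; split; auto.
Qed.

Lemma cond_prob_bounds A Q : borel op A -> borel op Q -> 0 < mu Q ->
  0 <= cond_prob mu A Q <= 1.
Proof.
  intros HA HQ Hpos. unfold cond_prob.
  assert (HAQ : borel op (fun x => A x /\ Q x)) by (apply borel_inter; auto).
  pose proof (mu_nonneg _ HAQ).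
  assert (mu (fun x => A x /\ Q x) <= mu Q) by (apply mu_mono; tauto).
  split.
  - apply Rmult_le_pos; auto. left; apply Rinv_0_lt_compat; auto.
  - apply Rmult_le_reg_r with (mu Q); auto. unfold Rdiv. rewrite Rmult_assoc, Rinv_l; lra.
Qed.

Lemma total_probability Y A n : borel op Y -> borel_partition op A n ->
  (forall i, (1 <= i <= n)%nat -> 0 < mu (A i)) ->
  mu Y = sumR (fun i => mu (A i) * cond_prob mu Y (A i)) n.
Proof.
  intros HY HA Hpos. rewrite (mu_part Y A n HY HA).
  apply sumR_ext. intros i Hi. specialize (Hpos i Hi). unfold cond_prob. field. lra.
Qed.

Lemma cond_prob_partition_sum A n Q : borel op Q -> borel_partition op A n -> 0 < mu Q ->
  sumR (fun i => cond_prob mu (A i) Q) n = 1.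
Proof.
  intros HQ HA Hpos. unfold cond_prob, Rdiv.
  rewrite (sumR_ext _ (fun i => / mu Q * mu (fun x => Q x /\ A i x)))
    by (intros; rewrite Rmult_comm; f_equal; apply set_fun_ext; tauto).
  rewrite sumR_scal, <- (mu_part Q A n HQ HA). field. lra.
Qed.

(** Markov property: if [Y] and [Q] are conditionally independent given each
    piece of the partition [A], then [P(Y | Q)] is the average of the
    [P(Y | A i)] against the conditional law [P(A i | Q)]. *)
Lemma cond_prob_markov Y Q A n : borel op Y -> borel op Q -> borel_partition op A n ->
  0 < mu Q -> (forall i, (1 <= i <= n)%nat -> 0 < mu (A i)) ->
  (forall i, (1 <= i <= n)%nat ->
     mu (fun x => Y x /\ Q x /\ A i x) * mu (A i) =
     mu (fun x => Q x /\ A i x) * mu (fun x => Y x /\ A i x)) ->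
  cond_prob mu Y Q = sumR (fun i => cond_prob mu (A i) Q * cond_prob mu Y (A i)) n.
Proof.
  intros HY HQ HA HQpos HApos Hind. unfold cond_prob at 1.
  rewrite (mu_part _ A n (borel_inter _ _ HY HQ) HA).
  unfold Rdiv. rewrite Rmult_comm, <- sumR_scal. apply sumR_ext. intros i Hi.
  specialize (HApos i Hi). specialize (Hind i Hi). unfold cond_prob.
  rewrite (set_fun_ext mu (fun x => (Y x /\ Q x) /\ A i x) (fun x => Y x /\ Q x /\ A i x)) by tauto.
  rewrite (set_fun_ext mu (fun x => A i x /\ Q x) (fun x => Q x /\ A i x)) by tauto.
  assert (E : mu (fun x => Y x /\ Q x /\ A i x) =
             mu (fun x => Q x /\ A i x) * mu (fun x => Y x /\ A i x) / mu (A i))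
    by (rewrite <- Hind; field; lra).
  rewrite E. field. lra.
Qed.
End Measure.

Section Towers.
Variables (X : Type) (op : set X -> Prop) (T : X -> X) (C : nat -> nat)
  (h : nat -> nat -> nat) (B : nat -> nat -> set X) (mu : set X -> R) (L : nat).
Hypothesis HopT : forall U, op U -> op (fun x => U (T x)).
Hypothesis Hsurj : forall y, exists x, T x = y.
Hypothesis Hne : exists x : X, True.
Hypothesis Hmu : borel_probability op mu.
Hypothesis Hinv : forall A, borel op A -> mu (fun x => A (T x)) = mu A.
Hypothesis Hckr : CKR_partitions op T C h B.
Hypothesis HKR1 : KR1 C B.
Hypothesis HKR2 : KR2 T C h B.
Hypothesis HKR5 : KR5 T C h B.
Hypothesis HL : forall n k l, (1 <= n)%nat -> (1 <= k <= C (n - 1))%nat ->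
  (1 <= l <= C n)%nat -> (h n l <= L * h (n - 1)%nat k)%nat.

Local Notation Lev := (atom T B).
Local Notation Tow := (tower T h B).

Lemma atom_unique n k j k' j' x : in_range C h n k j -> in_range C h n k' j' ->
  Lev n k j x -> Lev n k' j' x -> k = k' /\ j = j'.
Proof. destruct Hckr as [_ [H _]]. eauto. Qed.

Lemma atom_cover n x : exists k j, in_range C h n k j /\ Lev n k j x.
Proof. destruct Hckr as [_ [_ [H _]]]. eauto. Qed.

Lemma height_pos n k : (1 <= k <= C n)%nat -> (1 <= h n k)%nat.
Proof. destruct Hckr as [H _]. intros Hk; apply H; auto. Qed.

Lemma base_nonempty n k : (1 <= k <= C n)%nat -> exists x, B n k x.
Proof. destruct Hckr as [H _]. intros Hk; apply H; auto. Qed.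

Lemma roof_mono m n x : (m <= n)%nat -> roof C B n x -> roof C B m x.
Proof. induction 1; auto. Qed.

Lemma iter_surj n y : exists x, Nat.iter n T x = y.
Proof.
  revert y; induction n as [|n IH]; intro y; [exists y; auto|].
  destruct (Hsurj y) as [y' Hy']. destruct (IH y') as [x Hx].
  exists x. simpl. rewrite Hx; auto.
Qed.

(** Level indices can only grow when passing to a finer partition: the
    point [T^i x] is in the roof [B(n)], hence in [B(p)] for [p <= n]. *)
Lemma level_monotone p n r j s i x : (p <= n)%nat -> in_range C h p r j -> Lev p r j x ->
  in_range C h n s i -> Lev n s i x -> (j <= i)%nat.
Proof.
  intros Hpn Hr Ha Hs Hb.
  destruct (le_lt_dec j i) as [E|E]; auto. exfalso.
  assert (Hroof : roof C B p (Nat.iter i T x)).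
  { apply (roof_mono p n); auto. exists s. split; [apply Hs | exact Hb]. }
  destruct Hroof as [k [Hk Hbk]].
  assert (A1 : Lev p r (j - i) (Nat.iter i T x)).
  { unfold atom. rewrite <- Nat.iter_add. replace (j - i + i)%nat with j by lia. exact Ha. }
  destruct (atom_unique p r (j - i) k 0 _ ltac:(destruct Hr; split; auto; lia)
              ltac:(split; auto; pose proof (height_pos p k Hk); lia) A1 Hbk). lia.
Qed.

Definition column_invariant (p r : nat) (S : set X) : Prop :=
  forall j x, (j < h p r)%nat -> Lev p r j x -> (S x <-> S (Nat.iter j T x)).

Definition level_union (p r : nat) (U : set X) : Prop :=
  forall j, (j < h p r)%nat ->
    (forall x, Lev p r j x -> U x) \/ (forall x, Lev p r j x -> ~ U x).

Definition levels_in (p r : nat) (U : set X) : nat :=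
  count_lt (fun j => forall x, Lev p r j x -> U x) (h p r).

(** Towers of a finer partition run along columns of coarser ones, so
    membership in a tower of [P(n)] is constant on columns of [P(p)], [p <= n]. *)
Lemma tower_column_invariant n tb p r : (p <= n)%nat -> (1 <= tb <= C n)%nat ->
  (1 <= r <= C p)%nat -> column_invariant p r (Tow n tb).
Proof.
  intros Hpn Htb Hr j x Hj Ha. split.
  - intros [i [Hi Hb]].
    pose proof (level_monotone p n r j tb i x Hpn (conj Hr Hj) Ha (conj Htb Hi) Hb).
    exists (i - j)%nat. split; [lia|]. unfold atom. rewrite <- Nat.iter_add.
    replace (i - j + j)%nat with i by lia. exact Hb.
  - intros [i' [Hi' Hb']].
    destruct (atom_cover n x) as [s [i [Hs Hb]]].
    pose proof (level_monotone p n r j s i x Hpn (conj Hr Hj) Ha Hs Hb).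
    assert (A : Lev n s (i - j) (Nat.iter j T x)).
    { unfold atom. rewrite <- Nat.iter_add. replace (i - j + j)%nat with i by lia. exact Hb. }
    destruct (atom_unique n s (i - j) tb i' _ ltac:(destruct Hs; split; auto; lia)
                (conj Htb Hi') A Hb') as [-> _].
    exists i. split; [apply Hs | exact Hb].
Qed.

Lemma tower_level_union m t r : (1 <= t <= C m)%nat -> (1 <= r <= C (S m))%nat ->
  level_union (S m) r (Tow m t).
Proof.
  intros Ht Hr j Hj.
  destruct (HKR2 m r j (conj Hr Hj)) as [k' [j' [Hk' Hsub]]].
  destruct (Nat.eq_dec k' t) as [->|Ne].
  - left. intros x Hx. exists j'. split; [apply Hk' | auto].
  - right. intros x Hx [i [Hi Hb]].
    destruct (atom_unique m k' j' t i x Hk' (conj Ht Hi) (Hsub x Hx) Hb). auto.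
Qed.

Lemma preimage_level n r j w : in_range C h n r j -> Lev n r j (T w) ->
  roof C B n w \/ ((S j < h n r)%nat /\ Lev n r (S j) w).
Proof.
  intros Hr Ha. destruct (atom_cover n w) as [s [[|i] [Hs Hb]]].
  - left. exists s. split; [apply Hs | exact Hb].
  - right. assert (Hb' : Lev n s i (T w)) by (unfold atom in *; rewrite <- Nat.iter_succ_r; exact Hb).
    destruct (atom_unique n s i r j (T w) ltac:(destruct Hs; split; auto; lia) Hr Hb' Ha)
      as [-> ->].
    split; [apply Hs | exact Hb].
Qed.

(** (KR5) embeds a full copy of the tower [T_t(m)] as consecutive levels of
    every tower [T_r(m+1)]; hence [T_r(m+1)] has at least [h_t(m)] levels in [T_t(m)]. *)
Lemma tower_copy m t r : (1 <= t <= C m)%nat -> (1 <= r <= C (S m))%nat ->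
  (h m t <= levels_in (S m) r (Tow m t))%nat.
Proof.
  intros Ht Hr.
  destruct (HKR5 (S m) t r ltac:(lia) ltac:(simpl; rewrite Nat.sub_0_r; exact Ht) Hr)
    as [j0 [Hj0 Hsub]].
  simpl in Hsub. rewrite Nat.sub_0_r in Hsub.
  assert (Hcopy : forall i, (i < h m t)%nat -> (j0 + i < h (S m) r)%nat).
  { induction i as [|i IH]; intro Hi; [lia|].
    specialize (IH ltac:(lia)).
    destruct (base_nonempty (S m) r Hr) as [u Hu].
    destruct (iter_surj (j0 + i) u) as [w Hw].
    destruct (Hsurj w) as [w' Hw'].
    assert (Aw : Lev (S m) r (j0 + i) (T w')) by (unfold atom; rewrite Hw', Hw; exact Hu).
    assert (Am : Lev m t (S i) w').
    { unfold atom. apply Hsub. unfold atom.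
      rewrite <- Nat.iter_add, Nat.add_succ_r, Nat.iter_succ_r, Hw', Hw. exact Hu. }
    destruct (preimage_level (S m) r (j0 + i) w' (conj Hr IH) Aw) as [Hroof | [Hnext _]];
      [|lia].
    destruct (roof_mono m (S m) w' ltac:(lia) Hroof) as [k [Hk Hbk]].
    destruct (atom_unique m t (S i) k 0 w' (conj Ht Hi)
                ltac:(split; [auto | pose proof (height_pos m k Hk); lia]) Am Hbk).
    lia. }
  apply (count_lt_block _ j0).
  - intros i Hi x Hx. exists i. split; auto.
    apply Hsub. unfold atom in *. rewrite <- Nat.iter_add. exact Hx.
  - pose proof (height_pos m t Ht). specialize (Hcopy (h m t - 1)%nat ltac:(lia)). lia.
Qed.

Lemma borel_B n k : (1 <= k <= C n)%nat -> borel op (B n k).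
Proof. destruct Hckr as [H _]. intro Hk. apply borel_open, (H n k Hk). Qed.

Lemma borel_partial_tower n k h' : (1 <= k <= C n)%nat ->
  borel op (fun x => exists j, (j < h')%nat /\ Lev n k j x).
Proof.
  intro Hk. apply borel_cunion. intro j. destruct (lt_dec j h') as [E|E].
  - apply borel_ext with (Lev n k j); [intro; tauto | apply (borel_iter T HopT), borel_B, Hk].
  - apply borel_ext with (fun _ => False); [intro; tauto | apply borel_empty].
Qed.

Lemma borel_tower n k : (1 <= k <= C n)%nat -> borel op (Tow n k).
Proof. apply borel_partial_tower. Qed.

Lemma tower_partition p : borel_partition op (Tow p) (C p).
Proof.
  split; [|split].
  - apply borel_tower.
  - unfold tower. intros i j x Hi Hj [a [Ha Hxa]] [b [Hb Hxb]].
    destruct (atom_unique p i a j b x) as [E _]; auto; split; auto.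
  - intro x. destruct (atom_cover p x) as [k [j [[Hk Hj] Ha]]].
    exists k. split; auto. exists j; auto.
Qed.

Lemma sum_towers p : sumR (fun r => mu (Tow p r)) (C p) = 1.
Proof.
  destruct Hmu as [_ [Hfull _]]. rewrite <- Hfull.
  rewrite (mu_part Hmu (fun _ => True) (Tow p) (C p) borel_full (tower_partition p)).
  apply sumR_ext. intros; apply set_fun_ext; tauto.
Qed.

Lemma mu_level p r Sg j : (1 <= r <= C p)%nat -> borel op Sg -> column_invariant p r Sg ->
  (j < h p r)%nat -> mu (fun x => Sg x /\ Lev p r j x) = mu (fun x => Sg x /\ B p r x).
Proof.
  intros Hr HS Hcol Hj.
  rewrite (set_fun_ext mu _ (fun x => (fun y => Sg y /\ B p r y) (Nat.iter j T x))).
  - apply (mu_iter T HopT Hinv j (fun y => Sg y /\ B p r y)).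
    apply borel_inter; auto. apply borel_B, Hr.
  - intro x; split.
    + intros [Hs Ha]. split; [apply (Hcol j x); auto | exact Ha].
    + intros [Hs Hb]. split; [apply (Hcol j x Hj Hb); exact Hs | exact Hb].
Qed.

Lemma mu_tower_count p r Sg U : (1 <= r <= C p)%nat -> borel op Sg -> borel op U ->
  column_invariant p r Sg -> level_union p r U ->
  mu (fun x => Sg x /\ Tow p r x /\ U x) = INR (levels_in p r U) * mu (fun x => Sg x /\ B p r x).
Proof.
  intros Hr HS HU Hcol Hdi. unfold levels_in.
  set (P := fun j => forall x, Lev p r j x -> U x).
  assert (Partial : forall h', (h' <= h p r)%nat ->
    mu (fun x => Sg x /\ (exists j, (j < h')%nat /\ Lev p r j x) /\ U x) =
    INR (count_lt P h') * mu (fun x => Sg x /\ B p r x)).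
  { induction h' as [|h' IH]; intro Hh.
    - simpl. rewrite Rmult_0_l, <- (mu_empty Hmu). apply set_fun_ext. intro x; split; [|tauto].
      intros [_ [[j [Hj _]] _]]; lia.
    - rewrite (set_fun_ext mu _ (fun x => (Sg x /\ (exists j, (j < h')%nat /\ Lev p r j x) /\ U x) \/
                                         (Sg x /\ Lev p r h' x /\ U x))).
      2:{ intro x; split.
          - intros [Hs [[j [Hj Ha]] Hu]]. destruct (Nat.eq_dec j h') as [->|Ne];
              [right; auto | left; repeat split; auto; exists j; split; auto; lia].
          - intros [[Hs [[j [Hj Ha]] Hu]]|[Hs [Ha Hu]]]; repeat split; auto;
              [exists j; split; auto; lia | exists h'; split; auto; lia]. }
      rewrite (mu_union2 Hmu).
      + rewrite IH by lia. simpl count_lt. rewrite plus_INR. unfold indicator.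
        destruct excluded_middle_informative as [Pp|Np].
        * rewrite (set_fun_ext mu (fun x => Sg x /\ Lev p r h' x /\ U x)
                                  (fun x => Sg x /\ Lev p r h' x)) by firstorder.
          rewrite mu_level by (auto; lia). simpl. ring.
        * rewrite (set_fun_ext mu (fun x => Sg x /\ Lev p r h' x /\ U x) (fun _ => False)),
            (mu_empty Hmu); [simpl; ring|].
          intro x; split; [|tauto]. intros [Hs [Ha Hu]].
          destruct (Hdi h' ltac:(lia)) as [H1|H1]; [apply Np; exact H1 | apply (H1 x Ha Hu)].
      + repeat apply borel_inter; auto. apply borel_partial_tower, Hr.
      + repeat apply borel_inter; auto. apply (borel_iter T HopT), borel_B, Hr.
      + intros x [_ [[j [Hj Ha]] _]] [_ [Hb _]].
        destruct (atom_unique p r j r h' x ltac:(split; auto; lia) ltac:(split; auto; lia) Ha Hb).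
        lia. }
  apply Partial; auto.
Qed.

Lemma mu_tower_slice p r Sg : (1 <= r <= C p)%nat -> borel op Sg -> column_invariant p r Sg ->
  mu (fun x => Sg x /\ Tow p r x) = INR (h p r) * mu (fun x => Sg x /\ B p r x).
Proof.
  intros Hr HS Hcol.
  rewrite (set_fun_ext mu _ (fun x => Sg x /\ Tow p r x /\ True)) by tauto.
  rewrite mu_tower_count; auto using borel_full.
  - unfold levels_in. rewrite count_lt_all; auto.
  - intros j _; left; auto.
Qed.

Lemma mu_tower_trace m t r Sg : (1 <= t <= C m)%nat -> (1 <= r <= C (S m))%nat ->
  borel op Sg -> column_invariant (S m) r Sg ->
  mu (fun x => Sg x /\ Tow m t x /\ Tow (S m) r x) =
  INR (levels_in (S m) r (Tow m t)) * mu (fun x => Sg x /\ B (S m) r x).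
Proof.
  intros Ht Hr HS Hcol.
  rewrite (set_fun_ext mu _ (fun x => Sg x /\ Tow (S m) r x /\ Tow m t x)) by tauto.
  apply mu_tower_count; auto using borel_tower, tower_level_union.
Qed.

Lemma column_invariant_full p r : column_invariant p r (fun _ => True).
Proof. intros j x _ _; tauto. Qed.

(** Markov property of [(tau_m)]: given [tau_(m+1) = r], the events
    [tau_m = t] and [tau_n = tb] ([m < n]) are independent. *)
Lemma tower_cond_independence n tb m t r : (S m <= n)%nat -> (1 <= tb <= C n)%nat ->
  (1 <= t <= C m)%nat -> (1 <= r <= C (S m))%nat ->
  mu (fun x => Tow n tb x /\ Tow m t x /\ Tow (S m) r x) * mu (Tow (S m) r) =
  mu (fun x => Tow m t x /\ Tow (S m) r x) * mu (fun x => Tow n tb x /\ Tow (S m) r x).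
Proof.
  intros Hmn Htb Ht Hr.
  assert (Hcol : column_invariant (S m) r (Tow n tb)) by (apply tower_column_invariant; auto).
  rewrite (set_fun_ext mu (Tow (S m) r) (fun x => True /\ Tow (S m) r x)) by tauto.
  rewrite (set_fun_ext mu (fun x => Tow m t x /\ Tow (S m) r x)
                          (fun x => True /\ Tow m t x /\ Tow (S m) r x)) by tauto.
  rewrite !mu_tower_trace, !mu_tower_slice;
    auto using borel_tower, borel_full, column_invariant_full.
  ring.
Qed.

(** Minorization: [mu(T_r(m+1)) <= L mu(T_t(m) /\ T_r(m+1))], from the copy of
    [T_t(m)] inside [T_r(m+1)] and (LR). *)
Lemma tower_minorization m t r : (1 <= t <= C m)%nat -> (1 <= r <= C (S m))%nat ->
  mu (Tow (S m) r) <= INR L * mu (fun x => Tow m t x /\ Tow (S m) r x).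
Proof.
  intros Ht Hr.
  rewrite (set_fun_ext mu (Tow (S m) r) (fun x => True /\ Tow (S m) r x)) by tauto.
  rewrite (set_fun_ext mu (fun x => Tow m t x /\ Tow (S m) r x)
                          (fun x => True /\ Tow m t x /\ Tow (S m) r x)) by tauto.
  rewrite mu_tower_slice, mu_tower_trace; auto using borel_full, column_invariant_full.
  assert (Hcount : (h (S m) r <= L * levels_in (S m) r (Tow m t))%nat).
  { pose proof (HL (S m) t r ltac:(lia) ltac:(simpl; rewrite Nat.sub_0_r; exact Ht) Hr) as H.
    simpl in H. rewrite Nat.sub_0_r in H. pose proof (tower_copy m t r Ht Hr). nia. }
  apply le_INR in Hcount. rewrite mult_INR in Hcount.
  assert (0 <= mu (fun x => True /\ B (S m) r x))
    by (apply (mu_nonneg Hmu), borel_inter; [apply borel_full | apply borel_B, Hr]).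
  nra.
Qed.

Lemma L_pos : (1 <= L)%nat.
Proof.
  destruct Hne as [x _].
  destruct (tower_partition 0) as [_ [_ Hc0]]. destruct (Hc0 x) as [k0 [Hk0 _]].
  destruct (tower_partition 1) as [_ [_ Hc1]]. destruct (Hc1 x) as [k1 [Hk1 _]].
  pose proof (HL 1 1 1 (le_n 1) ltac:(simpl; lia) ltac:(lia)).
  pose proof (height_pos 1 1 ltac:(lia)).
  destruct L; lia.
Qed.

Lemma INR_L_pos : 0 < INR L.
Proof. apply lt_0_INR. pose proof L_pos. lia. Qed.

Lemma inv_L_range : 0 < / INR L <= 1.
Proof.
  pose proof L_pos as H. apply le_INR in H. simpl in H. split.
  - apply Rinv_0_lt_compat; lra.
  - rewrite <- Rinv_1. apply Rinv_le_contravar; lra.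
Qed.

Lemma tower_mass_lower m t : (1 <= t <= C m)%nat -> / INR L <= mu (Tow m t).
Proof.
  intros Ht. pose proof INR_L_pos.
  rewrite (mu_part Hmu (Tow m t) (Tow (S m)) (C (S m)) (borel_tower m t Ht) (tower_partition _)).
  apply Rle_trans with (sumR (fun r => / INR L * mu (Tow (S m) r)) (C (S m))).
  - rewrite sumR_scal, sum_towers. lra.
  - apply sumR_le. intros r Hr. pose proof (tower_minorization m t r Ht Hr).
    apply Rmult_le_reg_l with (INR L); auto.
    rewrite <- Rmult_assoc, Rinv_r by lra. lra.
Qed.

Lemma tower_mass_pos m t : (1 <= t <= C m)%nat -> 0 < mu (Tow m t).
Proof.
  intros Ht. pose proof (tower_mass_lower m t Ht).
  pose proof (Rinv_0_lt_compat _ INR_L_pos). lra.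
Qed.

Lemma transition_minor m t r : (1 <= t <= C m)%nat -> (1 <= r <= C (S m))%nat ->
  / INR L * mu (Tow (S m) r) <= cond_prob mu (Tow (S m) r) (Tow m t).
Proof.
  intros Ht Hr. unfold cond_prob.
  pose proof (tower_minorization m t r Ht Hr) as Hmin.
  pose proof (tower_mass_pos m t Ht) as Hpos.
  pose proof (mu_le1 Hmu _ (borel_tower m t Ht)) as Hle1.
  pose proof INR_L_pos.
  rewrite (set_fun_ext mu (fun x => Tow (S m) r x /\ Tow m t x)
                          (fun x => Tow m t x /\ Tow (S m) r x)) by tauto.
  set (a := mu (fun x => Tow m t x /\ Tow (S m) r x)) in *.
  assert (0 <= a) by (apply (mu_nonneg Hmu), borel_inter; apply borel_tower; auto).
  apply Rle_trans with a.
  - apply Rmult_le_reg_l with (INR L); auto. rewrite <- Rmult_assoc, Rinv_r by lra. lra.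
  - apply Rmult_le_reg_r with (mu (Tow m t)); auto. unfold Rdiv.
    rewrite Rmult_assoc, Rinv_l by lra. nra.
Qed.

Lemma markov_step n tb m t : (S m <= n)%nat -> (1 <= tb <= C n)%nat -> (1 <= t <= C m)%nat ->
  cond_prob mu (Tow n tb) (Tow m t) =
  sumR (fun r => cond_prob mu (Tow (S m) r) (Tow m t) * cond_prob mu (Tow n tb) (Tow (S m) r))
       (C (S m)).
Proof.
  intros Hmn Htb Ht.
  apply (cond_prob_markov Hmu); auto using borel_tower, tower_partition, tower_mass_pos.
  intros r Hr. apply tower_cond_independence; auto.
Qed.

Lemma tower_mixing n k t tb : (k <= n)%nat -> (1 <= t <= C (n - k))%nat ->
  (1 <= tb <= C n)%nat ->
  Rabs (cond_prob mu (Tow n tb) (Tow (n - k) t) - mu (Tow n tb)) <= (1 - / INR L) ^ k.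
Proof.
  intros Hk Ht Htb.
  assert (Heps : 0 <= / INR L <= 1) by (pose proof inv_L_range; lra).
  assert (Hosc : exists a b, b - a <= (1 - / INR L) ^ k /\
    forall s, (1 <= s <= C (n - k))%nat -> a <= cond_prob mu (Tow n tb) (Tow (n - k) s) <= b).
  { apply (doeblin_contraction C (fun m t r => cond_prob mu (Tow (S m) r) (Tow m t))
             (fun m r => mu (Tow (S m) r)) (fun m t => cond_prob mu (Tow n tb) (Tow m t)));
      auto; intros.
    - apply (cond_prob_bounds Hmu); auto using borel_tower, tower_mass_pos.
    - apply (cond_prob_partition_sum Hmu); auto using borel_tower, tower_partition, tower_mass_pos.
    - apply sum_towers.
    - apply transition_minor; auto.
    - apply markov_step; auto. }
  destruct Hosc as [a [b [Hab Hf]]].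
  assert (Havg : a <= mu (Tow n tb) <= b).
  { rewrite (total_probability Hmu (Tow n tb) (Tow (n - k)) (C (n - k)));
      auto using borel_tower, tower_partition, tower_mass_pos.
    destruct (sumR_bounds (C (n - k)) (fun s => mu (Tow (n - k) s))
                (fun s => cond_prob mu (Tow n tb) (Tow (n - k) s)) a b) as [Lo Hi]; auto.
    { intros s Hs. apply (mu_nonneg Hmu), borel_tower, Hs. }
    rewrite sum_towers in Lo, Hi. lra. }
  specialize (Hf t Ht). apply Rabs_le. lra.
Qed.
End Towers.

(** Only (KR1), (KR2), (KR5), (LR), surjectivity and continuity of [T], and the
    invariance of [mu] are used. *)
Theorem mainTheorem4 (X : Type) (op : set X -> Prop) (T : X -> X)
  (C : nat -> nat) (h : nat -> nat -> nat) (B : nat -> nat -> set X)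
  (mu : set X -> R) :
  minimal_cantor_system op T ->
  CKR_partitions op T C h B ->
  KR1 C B -> KR2 T C h B -> KR3 C B -> KR4 op T C h B ->
  KR5 T C h B -> KR6 C B -> LR C h ->
  invariant_probability op T mu ->
  (forall nu, invariant_probability op T nu -> forall A, borel op A -> nu A = mu A) ->
  exists c beta : R, 0 <= c /\ 0 <= beta < 1 /\
    forall n k t tb : nat, (k <= n)%nat ->
      (1 <= t <= C (n - k))%nat -> (1 <= tb <= C n)%nat ->
      Rabs (cond_prob mu (tower T h B n tb) (tower T h B (n - k) t)
            - mu (tower T h B n tb)) <= c * beta ^ k.
Proof.
  intros [[_ [Hne _]] [[_ [Hsurj [HopT _]]] _]] Hckr HKR1 HKR2 _ _ HKR5 _ [L HL] [Hmu Hinv] _.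
  assert (Hrate : 0 < / INR L <= 1) by (eapply inv_L_range; eauto).
  exists 1, (1 - / INR L). split; [lra|]. split; [lra|].
  intros n k t tb Hk Ht Htb. rewrite Rmult_1_l.
  eapply tower_mixing; eauto.
Qed.
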